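(* Let $I$ be a compact metric space, $\mu$ a non-negative finite Borel measure on $I$, $N\ge2$, $N'\le N$ natural numbers, and $s$ a surplus function satisfying Assumptions (A1) and (A2). Then the function $\hat s$ on $I^{N!}/\sim_{N!}$ is upper semi-continuous, and there is a lower semi-continuous function $\hat a\in L^1(I,\mu)$ such that $\hat s([i_1,\dots,i_{N!}])\le\sum_{k=1}^{N!}\hat a(i_k)$ for all $i_1,\dots,i_{N!}\in I$.
   Context: For $n\in\mathbb{N}$, $I^n/\sim_n$ is the quotient of $I^n$ by permutation of coordinates (quotient topology), the class of $(i_1,\dots,i_n)$ written $[i_1,\dots,i_n]$; $\mathcal{G}_n=I^n/\sim_n$ is the set of $n$-person groups and $\mathcal{G}=\bigcup_{n=N'}^N\mathcal{G}_n$. A surplus function is $s:\mathcal{G}\to[0,\infty)$, $s_n=s|_{\mathcal{G}_n}$. (A1): each $s_n$, $N'\le n\le N$, is continuous on $\mathcal{G}_n$. (A2): for each $N'\le n\le N$ there is a real-valued lower semi-continuous $a_n$ on $I$ with $s_n([i_1,\dots,i_n])\le\sum_{k=1}^na_n(i_k)$ for all $i_1,\dots,i_n$. For $N'\le n\le N$, $K_n\subset I^{N!}/\sim_{N!}$ is the set of classes $[i_1,\dots,i_{N!}]$ such that for every $i\in I$, $|\{k:i_k=i\}|$ is divisible by $N!/n$; $P_n:K_n\to\mathcal{G}_n$ sends $[\underbrace{j_1,\dots,j_1}_{N!/n},\dots,\underbrace{j_n,\dots,j_n}_{N!/n}]$ to $[j_1,\dots,j_n]$. Define $\hat s_n=s_n\circ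 P_n$ on $K_n$ and $\hat s_n=0$ off $K_n$, and $\hat s=\max_{N'\le n\le N}\frac{N}{n}\hat s_n$ on $I^{N!}/\sim_{N!}$. *)

From HB Require Import structures.
From mathcomp Require Import all_boot all_order all_algebra all_fingroup.
From mathcomp Require Import all_classical all_reals all_analysis.
Unset Printing Implicit Defensive.
Import Order.TTheory GRing.Theory Num.Theory numFieldNormedType.Exports.
Local Open Scope ring_scope.
Local Open Scope classical_set_scope.

Definition upper_semicont {R : realType} {T : topologicalType} (f : T -> R) :=
  forall t : R, open [set x | f x < t].
Definition lower_semicont {R : realType} {T : topologicalType} (f : T -> R) :=
  forall t : R, open [set x | t < f x].

Notation borel_type T := (g_sigma_algebraType (@open T)).

(* An element of I^m / ~_m is represented by a tuple x : 'I_m -> I; the class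
   of x is determined by the multiplicity function of x. *)
Definition mult {I : choiceType} {m : nat} (x : 'I_m -> I) (i : I) : nat :=
  #|[pred k | x k == i]|.

Definition inK {I : choiceType} (N n : nat) (x : 'I_(N`!) -> I) : Prop :=
  forall i : I, ((N`! %/ n) %| mult x i)%N.

(* y represents P_n [x] : [x] = [y_1 (N!/n times), ..., y_n (N!/n times)] *)
Definition isPn {I : choiceType} (N n : nat) (x : 'I_(N`!) -> I) (y : 'I_n -> I)
  : Prop := forall i : I, mult x i = (N`! %/ n * mult y i)%N.

Definition hat_s_n {R : realType} {I : choiceType} (s : forall n, ('I_n -> I) -> R)
  (N n : nat) (x : 'I_(N`!) -> I) : R :=
  if pselect (inK N n x) then
    match pselect (exists y, isPn N n x y) with
    | left h => s n (projT1 (cid h))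
    | right _ => 0
    end
  else 0.

(* \hat s = max_{N' <= n <= N} (N/n) \hat s_n  (all terms are >= 0) *)
Definition hat_s {R : realType} {I : choiceType} (s : forall n, ('I_n -> I) -> R)
  (N N' : nat) (x : 'I_(N`!) -> I) : R :=
  \big[Num.max/0]_(N' <= n < N.+1) ((N%:R / n%:R) * hat_s_n s N n x).

From HB Require Import structures.
From mathcomp Require Import all_boot all_order all_algebra all_fingroup.
From mathcomp Require Import all_classical all_reals all_analysis.
Import Order.TTheory GRing.Theory Num.Theory numFieldNormedType.Exports.

(* A tuple x : I^{N!} lies in K_n with P_n [x] = [y] exactly when
   x = y \o fold_ord p for some permutation p of the N! places, where
   fold_ord p k = (p k mod n); y is then read back as x \o unfold_ord p.
   For each of the finitely many p, the tuples of this shape form a closed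
   set (I is Hausdorff), and x |-> s_n (x \o unfold_ord p) is continuous;
   hence \hat s_n, and the finite maximum \hat s, are upper semicontinuous.
   An upper semicontinuous function on the compact space I^{N!} is bounded
   above, say by M, so the constant M / N! serves as \hat a. *)

Lemma sum_modn (V : nmodType) d n (F : nat -> V) :
  (\sum_(k < d * n) F (k %% n)%N = (\sum_(k < n) F k) *+ d)%R.
Proof.
rewrite -(big_mkord xpredT (fun k => F (k %% n))) big_nat_mul.
rewrite -[in RHS](subn0 d) -sumr_const_nat; apply: eq_bigr => i _.
rewrite mulSn -{1}[i * n]add0n big_addn addnK big_mkord.
by apply: eq_bigr => j _; rewrite addnC modnMDl modn_small.
Qed.

Section Multiplicity.
Context {I : choiceType}.

Lemma multE m (x : 'I_m -> I) i : mult x i = \sum_(k < m) (x k == i).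
Proof.
by rewrite /mult -sum1_card big_mkcond; apply: eq_bigr => k _; rewrite inE; case: eqP.
Qed.

Lemma mult_comp_perm m (x : 'I_m -> I) (p : 'S_m) i : mult (x \o p) i = mult x i.
Proof. by rewrite !multE [RHS](reindex_inj (@perm_inj _ p)). Qed.

Lemma count_mem_mktuple m (x : 'I_m -> I) i :
  count_mem i [tuple x k | k < m] = mult x i.
Proof.
rewrite /mult -sum1_card -sum1_count /= big_map enumT.
by apply: eq_bigl => k; rewrite inE.
Qed.

Lemma mult_eq_perm m (x y : 'I_m -> I) :
  mult x =1 mult y -> exists p : 'S_m, x = y \o p.
Proof.
move=> xy; have : perm_eq [tuple x k | k < m] [tuple y k | k < m].
  by apply/allP => i _ /=; rewrite !count_mem_mktuple xy.
case/tuple_permP => p xyp; exists p; apply: funext => k.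
by have := congr1 (nth (x k) ^~ k) xyp; rewrite -!tnth_nth !tnth_mktuple.
Qed.

Definition mod_ord {n} (n_gt0 : 0 < n) {m} (k : 'I_m) : 'I_n :=
  Ordinal (ltn_pmod k n_gt0).

Lemma mult_comp_mod_ord m n (n_gt0 : 0 < n) (n_dvd_m : n %| m)
    (y : 'I_n -> I) i :
  mult (y \o @mod_ord n n_gt0 m) i = m %/ n * mult y i.
Proof.
case/dvdnP: n_dvd_m => d ->; rewrite mulnK //.
pose G k := oapp (fun j => (y j == i) : nat) 0 (insub k).
rewrite !multE (eq_bigr (fun k : 'I_(d * n) => G (k %% n))) => [|k _]; last first.
  rewrite /G insubT /= => [|?]; first exact: ltn_pmod.
  by congr (y _ == i); exact: val_inj.
apply: etrans (sum_modn _ d n G) _.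
rewrite -mulr_natr natn mulnC; congr (_ * _).
by apply: eq_bigr => j _; rewrite /G valK.
Qed.

Lemma mult_scale_perm m n d (x : 'I_m -> I) (y y' : 'I_n -> I) :
    (0 < d) -> (forall i, mult x i = d * mult y i) ->
    (forall i, mult x i = d * mult y' i) ->
  exists q : 'S_n, y' = y \o q.
Proof.
move=> d_gt0 xy xy'; apply: mult_eq_perm => i.
by apply/eqP; rewrite -(eqn_pmul2l d_gt0) -xy -xy'.
Qed.

End Multiplicity.

Section Folding.
Context {I : choiceType} {m n : nat}.
Hypotheses (n_gt0 : 0 < n) (m_gt0 : 0 < m) (n_dvd_m : n %| m).

Definition fold_ord (p : 'S_m) (k : 'I_m) : 'I_n := mod_ord n_gt0 (p k).

Definition unfold_ord (p : 'S_m) (j : 'I_n) : 'I_m :=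
  (p^-1)%g (widen_ord (dvdn_leq m_gt0 n_dvd_m) j).

Lemma unfold_ordK p : cancel (unfold_ord p) (fold_ord p).
Proof. by move=> j; apply: val_inj; rewrite /= permKV /= modn_small. Qed.

Lemma mult_comp_fold_ord p (y : 'I_n -> I) i :
  mult (y \o fold_ord p) i = m %/ n * mult y i.
Proof.
by rewrite (@mult_comp_perm _ m (y \o mod_ord n_gt0)) mult_comp_mod_ord.
Qed.

Lemma mult_scale_fold_ord (x : 'I_m -> I) (y : 'I_n -> I) :
  (forall i, mult x i = m %/ n * mult y i) -> exists p, x = y \o fold_ord p.
Proof.
move=> xy; have [p ->] : exists p : 'S_m, x = y \o mod_ord n_gt0 \o p.
  by apply: mult_eq_perm => i; rewrite xy mult_comp_mod_ord.
by exists p.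
Qed.

End Folding.

Local Open Scope ring_scope.
Local Open Scope classical_set_scope.

Lemma hausdorff_near_neq {T U : topologicalType} (f g : T -> U) (x : T) :
    hausdorff_space U -> {for x, continuous f} -> {for x, continuous g} ->
  f x != g x -> \forall z \near x, f z != g z.
Proof.
rewrite open_hausdorff => U_T2 fx gx /U_T2[[A B] /= [/set_mem Afx /set_mem Bgx]].
move=> [oA oB /eqP AB0]; near=> z; apply/eqP => fgz.
have Afz : A (f z) by near: z; apply: fx; exact: open_nbhs_nbhs.
have Bgz : B (g z) by near: z; apply: gx; exact: open_nbhs_nbhs.
by rewrite -[False]/(set0 (f z)) -AB0; split; rewrite // fgz.
Unshelve. all: by end_near.
Qed.

Lemma cvg_ptws {U : Type} {T : topologicalType} (F : set_system {ptws U -> T})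
    {FF : Filter F} (f : {ptws U -> T}) :
  (forall u, (fun g : {ptws U -> T} => g u) @ F --> f u) -> F --> f.
Proof.
move=> Fu; apply/cvg_sup => u A /= [_ [[B oB <-] Bfu BA]].
exact: filterS (fun g Bg => BA g Bg) (Fu u B (open_nbhs_nbhs (conj oB Bfu))).
Qed.

Lemma continuous_comp_ptws {U V : eqType} {T : topologicalType} (h : V -> U) :
  continuous (fun z : {ptws U -> T} => (z \o h : {ptws V -> T})).
Proof.
move=> x; apply: (@cvg_ptws _ _ _ (fmap_filter _ (nbhs_filter x))) => v.
exact: (@proj_continuous _ (fun=> T) (h v) x).
Qed.

Lemma compact_ptws {U : eqType} {T : topologicalType} :
  compact [set: T] -> compact [set: {ptws U -> T}].
Proof.
move=> T_compact; have := @tychonoff U (fun=> T) (fun=> setT) (fun=> T_compact).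
by congr compact; apply/seteqP; split.
Qed.

Section Semicontinuity.
Context {R : realType} {T : topologicalType}.

Lemma open_set_const (P : Prop) : open [set _ : T | P].
Proof.
have [p|np] := pselect P; [rewrite (propT p); exact: openT|].
by rewrite (propF np); exact: open0.
Qed.

Lemma upper_semicont_cst (c : R) : upper_semicont (fun _ : T => c).
Proof. by move=> t; exact: open_set_const. Qed.

Lemma lower_semicont_cst (c : R) : lower_semicont (fun _ : T => c).
Proof. by move=> t; exact: open_set_const. Qed.

Lemma upper_semicont_max (f g : T -> R) :
    upper_semicont f -> upper_semicont g ->
  upper_semicont (fun x => Num.max (f x) (g x)).
Proof.
move=> uf ug t; rewrite (_ : [set x | _] = [set x | f x < t] `&` [set x | g x < t]).
  exact: openI.
by apply/seteqP; split => x /=; rewrite gt_max => /andP.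
Qed.

Lemma upper_semicont_bigmax {J : eqType} (r : seq J) (F : J -> T -> R) :
    (forall j, j \in r -> upper_semicont (F j)) ->
  upper_semicont (fun x => \big[Num.max/0]_(j <- r) F j x).
Proof.
elim: r => [|j r IHr] uF.
  by under eq_fun do rewrite big_nil; exact: upper_semicont_cst.
under eq_fun do rewrite big_cons.
apply: upper_semicont_max; first exact/uF/mem_head.
by apply: IHr => i ir; apply: uF; rewrite inE ir orbT.
Qed.

Lemma upper_semicont_scale (c : R) (f : T -> R) :
  0 < c -> upper_semicont f -> upper_semicont (fun x => c * f x).
Proof.
move=> c_gt0 uf t; rewrite (_ : [set x | _] = [set x | f x < t / c]) //.
by apply/seteqP; split => x /=; rewrite ltr_pdivlMr // mulrC.
Qed.

Lemma upper_semicont_bounded (f : T -> R) :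
  compact [set: T] -> upper_semicont f -> exists M, forall x, f x <= M.
Proof.
move=> /compact_near_coveringP T_cover uf.
have : \forall M \near +oo, [set: T] `<=` [set x | f x < M].
  apply: (T_cover R _ (fun M x => f x < M)) => x _.
  have near_x : \forall x' \near x, f x' < f x + 1.
    by apply: open_nbhs_nbhs; split; [exact: uf | rewrite /= ltrDl].
  near=> x' M => /=; apply: (@lt_le_trans _ _ (f x + 1)).
    by near: x'; exact: near_x.
  by near: M; exact: nbhs_pinfty_ge (num_real _).
by case/filter_ex => M fM; exists M => x; exact/ltW/fM.
Unshelve. all: by end_near.
Qed.

End Semicontinuity.

Section HatSN.
Context {R : realType} {I : topologicalType}.
Variables (s : forall n, ('I_n -> I) -> R) (N n : nat).
Hypotheses (n_gt0 : (0 < n)%N) (n_le_N : (n <= N)%N).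
Hypothesis s_sym :
  forall (y : 'I_n -> I) (q : {perm 'I_n}), s n (y \o q) = s n y.
Hypothesis s_ge0 : forall y : 'I_n -> I, 0 <= s n y.

Let n_dvd_fact : (n %| N`!)%N. Proof. by rewrite dvdn_fact // n_gt0. Qed.
Let fold := fold_ord (m := N`!) n_gt0.
Let unfold := unfold_ord (fact_gt0 N) n_dvd_fact.

Lemma hat_s_nE x y : isPn N n x y -> hat_s_n s N n x = s n y.
Proof.
move=> xy; rewrite /hat_s_n; case: pselect => [xK|]; last first.
  by case=> i; rewrite xy dvdn_mulr.
case: pselect => [ex|]; last by case; exists y.
case: (cid ex) => y' xy' /=.
have [|q ->] := @mult_scale_perm _ _ _ (N`! %/ n) x y' y _ xy' xy.
  by rewrite divn_gt0 //; exact: dvdn_leq (fact_gt0 N) n_dvd_fact.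
exact: esym (s_sym _ _).
Qed.

Lemma hat_s_n_out x : ~ (exists y, isPn N n x y) -> hat_s_n s N n x = 0.
Proof. by move=> xN; rewrite /hat_s_n; case: pselect => // xK; case: pselect. Qed.

Lemma hat_s_n_ge0 x : 0 <= hat_s_n s N n x.
Proof.
by have [[y /hat_s_nE ->]|/hat_s_n_out ->] := pselect (exists y, isPn N n x y).
Qed.

Hypothesis I_hausdorff : hausdorff_space I.
Hypothesis s_cont : continuous (fun y : {ptws 'I_n -> I} => s n y).

Lemma upper_semicont_hat_s_n :
  upper_semicont (fun x : {ptws 'I_(N`!) -> I} => hat_s_n s N n x).
Proof.
move=> t; rewrite openE => x /= xt.
have t_gt0 : 0 < t := le_lt_trans (hat_s_n_ge0 x) xt.
have near_folded : \forall z \near x, forall p : 'S_(N`!),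
    z = z \o unfold p \o fold p -> s n (z \o unfold p) < t.
  apply: (@filter_forall _ _ (fun p (z : {ptws 'I_(N`!) -> I}) =>
    z = z \o unfold p \o fold p -> s n (z \o unfold p) < t) _ (nbhs_filter x)) => p.
  have [xp|xNp] := pselect (x = x \o unfold p \o fold p).
    have s_cont_p : {for x, continuous (fun z : {ptws 'I_(N`!) -> I} =>
        s n (z \o unfold p))}.
      exact: continuous_comp (continuous_comp_ptws _ x) (s_cont _).
    have : hat_s_n s N n x = s n (x \o unfold p).
      by apply: hat_s_nE => i; rewrite {1}xp mult_comp_fold_ord.
    move: xt => /[swap] -> /(cvgr_lt _ s_cont_p).
    by apply: filterS => z zt _.
  have [k /eqP xk] : exists k, x (unfold p (fold p k)) <> x k.
    by apply/existsNP => xk; apply: xNp; apply: funext => k; exact/esym/xk.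
  have : \forall z \near x, z (unfold p (fold p k)) != z k.
    apply: hausdorff_near_neq => //; exact: (@proj_continuous _ (fun=> I)).
  apply: filterS => z zk /(congr1 (fun f => f k)) /= zE.
  by rewrite -zE eqxx in zk.
apply: filterS near_folded => z zt /=.
have [[y zy]|zN] := pselect (exists y, isPn N n z y); last by rewrite hat_s_n_out.
have [p zp] := mult_scale_fold_ord n_gt0 n_dvd_fact _ _ zy.
have yE : z \o unfold p = y.
  by apply: funext => j; rewrite zp /=; congr y; exact: unfold_ordK.
by rewrite (hat_s_nE _ _ zy) -yE; apply: zt; rewrite yE.
Qed.

End HatSN.

Theorem lemma1 (R : realType) (I : pseudoPMetricType R)
  (I_compact : compact [set: I]) (I_hausdorff : hausdorff_space I)
  (mu : {measure set (borel_type I) -> \bar R})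
  (mu_fin : (mu [set: borel_type I] < +oo)%E)
  (N N' : nat) (HN : (2 <= N)%N) (HN'1 : (1 <= N')%N) (HN'N : (N' <= N)%N)
  (s : forall n : nat, ('I_n -> I) -> R)
  (s_sym : forall n : nat, (N' <= n <= N)%N ->
     forall (y : 'I_n -> I) (sigma : {perm 'I_n}), s n (y \o sigma) = s n y)
  (s_ge0 : forall n : nat, (N' <= n <= N)%N -> forall y : 'I_n -> I, 0 <= s n y)
  (A1 : forall n : nat, (N' <= n <= N)%N ->
     continuous (fun y : {ptws 'I_n -> I} => s n y))
  (A2 : forall n : nat, (N' <= n <= N)%N ->
     exists a : I -> R, lower_semicont a /\
       forall y : 'I_n -> I, s n y <= \sum_(k < n) a (y k)) :
  upper_semicont (fun x : {ptws 'I_(N`!) -> I} => hat_s s N N' x) /\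
  exists a : I -> R,
    [/\ lower_semicont a,
        mu.-integrable [set: borel_type I] (fun i : borel_type I => (a i)%:E)
      & forall x : 'I_(N`!) -> I, hat_s s N N' x <= \sum_(k < N`!) a (x k)].
Proof.
have hat_s_usc : upper_semicont (fun x : {ptws 'I_(N`!) -> I} => hat_s s N N' x).
  apply: upper_semicont_bigmax => n; rewrite mem_index_iota ltnS => nN.
  have n_gt0 : (0 < n)%N by case/andP: nN => /(leq_trans HN'1).
  apply: upper_semicont_scale; first by rewrite divr_gt0 ?ltr0n // (leq_trans _ HN).
  apply: upper_semicont_hat_s_n => //; first by case/andP: nN.
  - exact: s_sym.
  - exact: s_ge0.
  - exact: A1.
split => //.
have [M hat_s_le] := upper_semicont_bounded _ (compact_ptws I_compact) hat_s_usc.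
exists (fun=> M / N`!%:R); split.
- exact: lower_semicont_cst.
- apply/integrableP; split; first exact: measurable_cst.
  by rewrite integral_cst //= lte_mul_pinfty.
- move=> x; rewrite sumr_const card_ord -(mulr_natr (M / N`!%:R)).
  by rewrite divfK ?pnatr_eq0 -?lt0n ?fact_gt0.
Qed.
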